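(* Let $S\subset\{2,\dots,p\}$ with cardinality ${\rm s}$ and let $\gamma^\sharp\in\mathbb{R}^{p-1}$ have $\gamma^\sharp_j=0$ for all $j\notin S$. Let $\lambda^\sharp>0$ satisfy $\|\Sigma_{-1,-1}(\gamma^\sharp-\gamma^0)\|_\infty\le\lambda^\sharp$. If $\lambda^\sharp\sqrt{\rm s}\to0$, then also $\lambda^\sharp\|\gamma^\sharp\|_1\to0$, so that $(\gamma^\sharp,\lambda^\sharp)$ is an eligible pair. Moreover, $$1/\Theta^\sharp_{1,1}=\mathbb{E}(\mathbf{x}_1-\mathbf{x}_S\gamma^S_S)^2+o(1),\qquad\text{where }\gamma^S_S=\Sigma_{S,S}^{-1}\mathbb{E}\mathbf{x}_S^T\mathbf{x}_1 .$$
   Context: Asymptotic framework: all quantities may depend on $n$; limits as $n\to\infty$. $\mathbf{x}=(\mathbf{x}_1,\dots,\mathbf{x}_p)$ is a zero-mean Gaussian row vector with covariance $\Sigma$ nonsingular, all diagonal entries $1$, smallest eigenvalue $\Lambda_{\min}^2$ with $1/\Lambda_{\min}^2=\mathcal{O}(1)$. $\mathbf{x}_{-1}=(\mathbf{x}_2,\dots,\mathbf{x}_p)$, $\Sigma_{-1,-1}=\mathbb{E}\mathbf{x}_{-1}^T\mathbf{x}_{-1}$, $\gamma^0:=\Sigma_{-1,-1}^{-1}\mathbb{E}\mathbf{x}_{-1}^T\mathbf{x}_1$ (entries indexed by $\{2,\dots,p\}$). $\mathbf{x}_S=\{\mathbf{x}_j\}_{j\in S}$, $\Sigma_{S,S}=\mathbb{E}\mathbf{x}_S^T\mathbf{x}_S$.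 A pair $(\gamma,\lambda)$ is eligible if $\|\Sigma_{-1,-1}(\gamma-\gamma^0)\|_\infty\le\lambda$ and $\lambda\|\gamma\|_1\to0$. $\Theta^\sharp_{1,1}:=1/(1-\gamma^{0T}\Sigma_{-1,-1}\gamma^\sharp)$. *)

From HB Require Import structures.
From mathcomp Require Import all_boot all_order all_algebra.
From mathcomp Require Import classical_sets reals topology normedtype sequences.
Set Implicit Arguments. Unset Strict Implicit. Unset Printing Implicit Defensive.
Import Order.TTheory GRing.Theory Num.Theory numFieldNormedType.Exports.
Local Open Scope classical_set_scope.
Local Open Scope ring_scope.

(* Conventions: p = q.+1 ; coordinate x_1 is index ord0 of 'I_q.+1 and
   coordinate x_{i+2} (i : 'I_q) is index lift ord0 i. Vectors in R^{p-1}
   are column vectors 'cV_q indexed by {2,..,p} via i |-> lift ord0 i.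
   Sig is the covariance matrix E x^T x of the Gaussian row vector x. *)

Section Defs.
Variables (R : realType) (q : nat).

Definition Sig_m1m1 (Sig : 'M[R]_q.+1) : 'M[R]_q :=
  \matrix_(i, j) Sig (lift ord0 i) (lift ord0 j).

Definition Sig_m1_1 (Sig : 'M[R]_q.+1) : 'cV[R]_q :=
  \col_i Sig (lift ord0 i) ord0.

Definition gamma0 (Sig : 'M[R]_q.+1) : 'cV[R]_q :=
  invmx (Sig_m1m1 Sig) *m Sig_m1_1 Sig.

Definition l1norm (v : 'cV[R]_q) : R := \sum_i `|v i 0|.

Definition supnorm_le (Sig : 'M[R]_q.+1) (g : 'cV[R]_q) (lam : R) : Prop :=
  forall i, `|(Sig_m1m1 Sig *m (g - gamma0 Sig)) i 0| <= lam.

Definition Theta11 (Sig : 'M[R]_q.+1) (g : 'cV[R]_q) : R :=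
  (1 - ((gamma0 Sig)^T *m Sig_m1m1 Sig *m g) 0 0)^-1.

Definition Sig_SS (Sig : 'M[R]_q.+1) (S : {set 'I_q}) : 'M[R]_#|S| :=
  \matrix_(i, j) Sig_m1m1 Sig (@enum_val _ (mem S) i) (@enum_val _ (mem S) j).

Definition Sig_S1 (Sig : 'M[R]_q.+1) (S : {set 'I_q}) : 'cV[R]_#|S| :=
  \col_i Sig_m1_1 Sig (@enum_val _ (mem S) i) 0.

Definition gammaSS (Sig : 'M[R]_q.+1) (S : {set 'I_q}) : 'cV[R]_#|S| :=
  invmx (Sig_SS Sig S) *m Sig_S1 Sig S.

(* coefficient vector c in R^p with x c = x_1 - x_S g *)
Definition resid_coef (S : {set 'I_q}) (g : 'cV[R]_#|S|) : 'cV[R]_q.+1 :=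
  \col_a (if a == ord0 then 1
          else - \sum_(k : 'I_#|S|)
                   (if a == lift ord0 (@enum_val _ (mem S) k) then g k 0 else 0)).

(* E (x c)^2 = c^T (E x^T x) c = c^T Sig c *)
Definition second_moment (Sig : 'M[R]_q.+1) (c : 'cV[R]_q.+1) : R :=
  (c^T *m Sig *m c) 0 0.

Definition msq_resid (Sig : 'M[R]_q.+1) (S : {set 'I_q}) (g : 'cV[R]_#|S|) : R :=
  second_moment Sig (resid_coef g).

Definition std_cov (Sig : 'M[R]_q.+1) : Prop :=
  [/\ Sig^T = Sig,
      (forall c : 'cV[R]_q.+1, 0 <= (c^T *m Sig *m c) 0 0),
      Sig \in unitmx &
      (forall a, Sig a a = 1)].

End Defs.

Definition eligible (R : realType) (q : nat -> nat) (Sig : forall n, 'M[R]_((q n).+1))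
  (g : forall n, 'cV[R]_(q n)) (lam : nat -> R) : Prop :=
  (forall n, supnorm_le (Sig n) (g n) (lam n)) /\
  (fun n => lam n * l1norm (g n)) @ \oo --> (0 : R).

From HB Require Import structures.
From mathcomp Require Import all_boot all_order all_algebra.
From mathcomp Require Import classical_sets reals topology normedtype sequences.
From mathcomp Require Import complex spectral sesquilinear.
From mathcomp Require Import ring lra.
Import Order.TTheory GRing.Theory Num.Theory numFieldNormedType.Exports.
Set Implicit Arguments. Unset Strict Implicit. Unset Printing Implicit Defensive.
Local Open Scope classical_set_scope.
Local Open Scope ring_scope.

(* Write A = Sigma_{-1,-1}, b = Sigma_{-1,1}, s = #|S| and d = A (gamma# - gamma0),
   so that |d|_oo <= lambda#.  If c > 0 bounds the eigenvalues of Sigma from below,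
   then c |v|^2 <= v^T A v, and positivity of Sigma at (1, -gamma0) gives
   gamma0^T A gamma0 <= 1.  Expanding 0 <= (gamma# - gamma0)^T A (gamma# - gamma0)
   yields c |gamma#|^2 <= 1 + 2 lambda# |gamma#|_1, and Cauchy-Schwarz on S gives
   |gamma#|_1^2 <= s |gamma#|^2; so w = lambda# |gamma#|_1 satisfies w^2 <= k (1 + 2 w)
   with k = (lambda# sqrt s)^2 / c, whence w^2 <= 2 k + 4 k^2 -> 0.
   If y is gamma^S_S extended by zero, the normal equations for gamma^S_S turn
   1/Theta# - E (x_1 - x_S gamma^S_S)^2 into -y^T d, which is at most
   lambda# |y|_1 <= lambda# sqrt s |y| in absolute value, while
   c |y|^2 <= y^T A y = 1 - E (x_1 - x_S gamma^S_S)^2 <= 1. *)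

Lemma sqr_sum_le_card (R : realFieldType) (I : finType) (A : {pred I}) (a : I -> R) :
  (\sum_(i in A) a i) ^+ 2 <= #|A|%:R * \sum_(i in A) a i ^+ 2.
Proof.
have am_gm i j : a i * a j <= (a i ^+ 2 + a j ^+ 2) / 2.
  by have := sqr_ge0 (a i - a j); lra.
rewrite expr2 big_distrlr /=.
apply: (le_trans (ler_sum _ (fun i _ => ler_sum _ (fun j _ => am_gm i j)))).
under [X in X <= _]eq_bigr => i _ do rewrite -mulr_suml big_split /= [X in X + _]sumr_const.
rewrite -mulr_suml big_split /= sumrMnl [X in _ + X]sumr_const -mulr_natl; lra.
Qed.

Section SelectionMatrix.
Variable R : pzRingType.

Definition selmx m n (f : 'I_m -> 'I_n) : 'M[R]_(n, m) := mxsub id f 1%:M.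

Lemma selmxE m n (f : 'I_m -> 'I_n) a i : selmx f a i = (a == f i)%:R.
Proof. by rewrite !mxE. Qed.

Lemma tr_selmx m n (f : 'I_m -> 'I_n) : (selmx f)^T = mxsub f id 1%:M.
Proof. by rewrite trmx_mxsub trmx1. Qed.

Lemma mxsub_selmx m n m' n' (f : 'I_m' -> 'I_m) (g : 'I_n' -> 'I_n) (M : 'M[R]_(m, n)) :
  mxsub f g M = (selmx f)^T *m M *m selmx g.
Proof. by rewrite tr_selmx mul_rowsub_mx mul1mx mulmx_colsub mulmx1 mxsubcr. Qed.

Lemma mul_selmx m n p (f : 'I_m -> 'I_n) (g : 'I_n -> 'I_p) :
  selmx g *m selmx f = selmx (g \o f).
Proof. by rewrite /selmx mulmx_colsub mulmx1 -colsub_comp. Qed.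

Lemma selmx_mulE m n (f : 'I_m -> 'I_n) (v : 'cV[R]_m) a :
  (selmx f *m v) a 0 = \sum_(i | a == f i) v i 0.
Proof.
rewrite mxE [RHS]big_mkcond /=; apply: eq_bigr => i _.
by rewrite selmxE; case: eqP; rewrite ?mul1r ?mul0r.
Qed.

Lemma tr_selmx_mulE m n (f : 'I_m -> 'I_n) (v : 'cV[R]_n) i :
  ((selmx f)^T *m v) i 0 = v (f i) 0.
Proof. by rewrite tr_selmx mul_rowsub_mx mul1mx mxE. Qed.

Lemma tr_selmx_mul_selmx m n (f : 'I_m -> 'I_n) : injective f ->
  (selmx f)^T *m selmx f = 1%:M.
Proof.
move=> f_inj; apply/matrixP => i j.
by rewrite tr_selmx mul_rowsub_mx mul1mx !mxE (inj_eq f_inj).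
Qed.

Section EnumSelection.
Variables (n : nat) (S : {set 'I_n}).
Local Notation P := (selmx (@enum_val _ (mem S))).

Lemma selmx_enum_notin (v : 'cV[R]_#|S|) j : j \notin S -> (P *m v) j 0 = 0.
Proof.
move=> jS; rewrite selmx_mulE big_pred0 // => k.
by apply: contraNF jS => /eqP ->; exact: enum_valP.
Qed.

Lemma selmx_enum_supp (v : 'cV[R]_n) :
  (forall j, j \notin S -> v j 0 = 0) -> P *m (P^T *m v) = v.
Proof.
move=> vS; apply/colP => j; case: (boolP (j \in S)) => jS; last first.
  by rewrite vS // selmx_enum_notin.
rewrite selmx_mulE (big_pred1 (enum_rank_in jS j)) => [|k].
  by rewrite tr_selmx_mulE enum_rankK_in.
by rewrite /= -{1}(enum_rankK_in jS jS) (inj_eq enum_val_inj) eq_sym.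
Qed.

End EnumSelection.

End SelectionMatrix.
Arguments selmx {R m n}.

Lemma entryB (R : zmodType) m n (A B : 'M[R]_(m, n)) i j : (A - B) i j = A i j - B i j.
Proof. by rewrite !mxE. Qed.

Lemma tr_mulmxC (R : comNzRingType) n (u v : 'cV[R]_n) : (u^T *m v) 0 0 = (v^T *m u) 0 0.
Proof. by rewrite -[v^T *m u]trmxK trmx_mul trmxK [RHS]mxE. Qed.

Lemma quad_formC (R : comNzRingType) n (M : 'M[R]_n) (u v : 'cV[R]_n) :
  M^T = M -> (u^T *m M *m v) 0 0 = (v^T *m M *m u) 0 0.
Proof. by move=> Msym; rewrite -mulmxA tr_mulmxC trmx_mul Msym. Qed.

Lemma quad_formB (R : comNzRingType) n (M : 'M[R]_n) (u v : 'cV[R]_n) : M^T = M ->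
  ((u - v)^T *m M *m (u - v)) 0 0
    = (u^T *m M *m u) 0 0 - 2 * (u^T *m M *m v) 0 0 + (v^T *m M *m v) 0 0.
Proof.
move=> Msym; rewrite mulmxBr [(u - v)^T]linearB /= !mulmxBl.
by rewrite !entryB (quad_formC v) //; ring.
Qed.

Section QuadraticLowerBound.
Variable R : realFieldType.

Lemma sqnormE n (v : 'cV[R]_n) : (v^T *m v) 0 0 = \sum_i v i 0 ^+ 2.
Proof. by rewrite mxE; apply: eq_bigr => i _; rewrite mxE expr2. Qed.

Lemma sqnorm_ge0 n (v : 'cV[R]_n) : 0 <= (v^T *m v) 0 0.
Proof. by rewrite sqnormE sumr_ge0 // => i _; rewrite sqr_ge0. Qed.

Lemma sqnorm_eq0 n (v : 'cV[R]_n) : ((v^T *m v) 0 0 == 0) = (v == 0).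
Proof.
apply/idP/eqP => [|->]; last by rewrite mulmx0 mxE.
rewrite sqnormE psumr_eq0 => [/allP v0|i _]; last exact: sqr_ge0.
by apply/colP => i; rewrite mxE; apply/eqP; rewrite -sqrf_eq0 (implyP (v0 i _)) ?mem_index_enum.
Qed.

Definition quad_lbound n (M : 'M[R]_n) (c : R) :=
  forall v : 'cV[R]_n, c * (v^T *m v) 0 0 <= (v^T *m M *m v) 0 0.

Lemma quad_lbound_mxsub m n (f : 'I_m -> 'I_n) (M : 'M[R]_n) c :
  injective f -> quad_lbound M c -> quad_lbound (mxsub f f M) c.
Proof.
move=> f_inj Mc v; have := Mc (selmx f *m v).
have -> : (selmx f *m v)^T *m (selmx f *m v) = v^T *m v.
  by rewrite trmx_mul mulmxA -(mulmxA v^T) tr_selmx_mul_selmx // mulmx1.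
by rewrite mxsub_selmx trmx_mul !mulmxA.
Qed.

Lemma quad_lbound_unitmx n (M : 'M[R]_n) c :
  0 < c -> quad_lbound M c -> M \in unitmx.
Proof.
move=> c0 Mc; rewrite unitmxE unitfE; apply/negP => /det0P [v v0 vM].
have := Mc v^T; rewrite trmxK vM mul0mx [X in _ <= X]mxE pmulr_rle0 // => vv.
by move: v0; rewrite -trmx_eq0 -sqnorm_eq0 eq_le sqnorm_ge0 trmxK vv.
Qed.

End QuadraticLowerBound.

Section SymmetricEigenvalues.
Local Open Scope sesquilinear_scope.

Lemma diag_quad_ge (C : numClosedFieldType) m (D w : 'rV[C]_m) c :
  (forall i, c <= D 0 i) -> c * (w *m w^t*) 0 0 <= (w *m diag_mx D *m w^t*) 0 0.
Proof.
move=> cD; rewrite !mxE mulr_sumr; apply: ler_sum => i _.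
rewrite mul_mx_diag !mxE mulrA -(mulrC (D 0 i)) -!mulrA.
by apply: ler_wpM2r => //; apply: mul_conjC_ge0.
Qed.

Variable R : realType.
Local Notation toC := (real_complex R).

Lemma realsym_hermsymmx m (M : 'M[R]_m) : M^T = M -> map_mx toC M \is hermsymmx.
Proof.
move=> Msym; apply: realsym_hermsym.
  apply/is_hermitianmxP; rewrite expr0 scale1r; apply/matrixP => i j.
  by rewrite !mxE -[in LHS]Msym mxE.
by apply/mxOverP => i j; rewrite mxE; apply/complex_realP; exists (M i j).
Qed.

Lemma realsym_spectral_eigenvalue m (M : 'M[R]_m) (i : 'I_m) : M^T = M ->
  exists2 a, spectral_diag (map_mx toC M) 0 i = toC a & eigenvalue M a.
Proof.
move=> Msym; have MCh := realsym_hermsymmx Msym.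
set P := spectralmx (map_mx toC M); set D := spectral_diag (map_mx toC M).
have /orthomx_spectralP MCE := hermitian_normalmx MCh.
have Punit : P \in unitmx := spectral_unit _.
have /RRe_real Di : D 0 i \is Num.real.
  by move/mxOverP: (hermitian_spectral_diag_real MCh); apply.
exists (complex.Re (D 0 i)); first by rewrite Di.
rewrite -(eigenvalue_map toC); apply/eigenvalueP; exists (row i P).
  transitivity (D 0 i *: row i P); last by congr (_ *: _); symmetry; exact: Di.
  rewrite -row_mul {1}MCE !mulmxA mulmxV // mul1mx mul_diag_mx.
  by apply/rowP => j; rewrite !mxE.
apply/eqP => /(congr1 (mulmx^~ (invmx P))).
by rewrite mul0mx -row_mul mulmxV // => /rowP /(_ i) /eqP; rewrite !mxE eqxx oner_eq0.
Qed.

(* Over R[i], M = P^-1 diag(D) P with P unitary, and every entry of D is an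
   eigenvalue of M, hence at least c. *)
Lemma eigen_quad_lbound m (M : 'M[R]_m) c : M^T = M ->
  (forall a, eigenvalue M a -> c <= a) -> quad_lbound M c.
Proof.
move=> Msym Mc; suff row_bound (w : 'rV_m) : c * (w *m w^T) 0 0 <= (w *m M *m w^T) 0 0.
  by move=> v; have := row_bound v^T; rewrite trmxK.
have /orthomx_spectralP MCE := hermitian_normalmx (realsym_hermsymmx Msym).
set P := spectralmx (map_mx toC M) in MCE; set D := spectral_diag (map_mx toC M) in MCE.
have cD i : toC c <= D 0 i.
  by have [a -> /Mc] := realsym_spectral_eigenvalue i Msym; rewrite lecR.
set wC := map_mx toC w.
have wCT : map_mx toC w^T = wC^t*.
  by apply/matrixP => i j; rewrite !mxE /= conj_Creal //; apply/complex_realP; exists (w j i).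
have wMw : toC ((w *m M *m w^T) 0 0) = (wC *m map_mx toC M *m wC^t*) 0 0.
  by rewrite -wCT -!map_mxM [RHS]mxE.
have ww : toC ((w *m w^T) 0 0) = (wC *m wC^t*) 0 0.
  by rewrite -wCT -map_mxM [RHS]mxE.
have Pu : P \is unitarymx := spectral_unitarymx _.
rewrite -lecR rmorphM /= wMw ww MCE invmx_unitary // !mulmxA.
have -> : wC *m wC^t* = wC *m P^t* *m (wC *m P^t*)^t*.
  by rewrite trmx_mul map_mxM trmxCK mulmxA mulmxKtV.
have -> : wC *m P^t* *m diag_mx D *m P *m wC^t* = wC *m P^t* *m diag_mx D *m (wC *m P^t*)^t*.
  by rewrite trmx_mul map_mxM trmxCK mulmxA.
exact: diag_quad_ge.
Qed.
End SymmetricEigenvalues.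

Lemma dot_le_l1norm (R : realType) n (y d : 'cV[R]_n) lam :
  (forall i, `|d i 0| <= lam) -> `|(y^T *m d) 0 0| <= lam * l1norm y.
Proof.
move=> d_le; rewrite mxE mulr_sumr; apply: le_trans (ler_norm_sum _ _ _) _.
apply: ler_sum => i _; rewrite mxE normrM mulrC.
by apply: ler_wpM2r.
Qed.

Lemma l1norm_sqr_le (R : realType) n (S : {set 'I_n}) (y : 'cV[R]_n) :
  (forall j, j \notin S -> y j 0 = 0) -> l1norm y ^+ 2 <= #|S|%:R * (y^T *m y) 0 0.
Proof.
move=> yS; have sumS F : (forall j, y j 0 = 0 -> F j = 0) ->
    \sum_j F j = \sum_(j in S) F j :> R.
  by move=> F0; rewrite [RHS]big_rmcond // => j /yS /F0.
rewrite sqnormE /l1norm (sumS (fun j => `|y j 0|)) => [|j ->]; last exact: normr0.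
rewrite (sumS (fun j => y j 0 ^+ 2)) => [|j ->]; last exact: expr0n.
have -> : \sum_(j in S) y j 0 ^+ 2 = \sum_(j in S) `|y j 0| ^+ 2.
  by apply: eq_bigr => j _; rewrite real_normK ?num_real.
exact: sqr_sum_le_card.
Qed.

Lemma cvg0_sqr_le (R : realType) (z k : nat -> R) :
  k @ \oo --> 0 -> (\forall n \near \oo, z n ^+ 2 <= k n) -> z @ \oo --> 0.
Proof.
move=> /cvgr0Pnorm_lt k0 z_le; apply/cvgr0Pnorm_lt => e e0.
near=> n.
have zk : z n ^+ 2 <= k n by near: n.
have ke : `|k n| < e ^+ 2 by near: n; apply: k0; rewrite exprn_gt0.
rewrite -(ltr_pXn2r (_ : 0 < 2)%N) ?nnegrE ?normr_ge0 ?(ltW e0) // real_normK ?num_real //.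
exact: le_lt_trans zk (le_lt_trans (ler_norm _) ke).
Unshelve. all: by end_near.
Qed.

Lemma cvg0_poly_sqr_div (R : realType) (u : nat -> R) (c : R) : u @ \oo --> 0 ->
  (fun n => 2 * (u n ^+ 2 / c) + 4 * (u n ^+ 2 / c) ^+ 2) @ \oo --> 0.
Proof.
move=> u0; have k0 : (fun n => u n ^+ 2 / c) @ \oo --> 0.
  by rewrite -(mul0r c^-1) -(mul0r 0); apply: cvgMr_tmp; exact: cvgM.
rewrite (_ : 0 = 2 * 0 + 4 * (0 * 0)); last by rewrite !mulr0 addr0.
by apply: cvgD; apply: cvgMl_tmp => //; exact: cvgM.
Qed.

Section Covariance.
Variables (R : realType) (q : nat) (Sig : 'M[R]_q.+1).

Local Notation A := (Sig_m1m1 Sig).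
Local Notation b := (Sig_m1_1 Sig).
(* x (e0 - E y) = x_1 - x_{-1} y *)
Local Notation E := (selmx (lift ord0) : 'M[R]_(q.+1, q)).
Local Notation e0 := (selmx (fun=> ord0) : 'cV[R]_q.+1).

Lemma Sig_m1m1E : A = mxsub (lift ord0) (lift ord0) Sig.
Proof. by apply/matrixP => i j; rewrite !mxE. Qed.

Lemma Sig_m1_1E : b = mxsub (lift ord0) (fun=> ord0) Sig.
Proof. by apply/matrixP => i j; rewrite !mxE. Qed.

Lemma Sig_SSE (S : {set 'I_q}) :
  Sig_SS Sig S = mxsub (@enum_val _ (mem S)) (@enum_val _ (mem S)) A.
Proof. by apply/matrixP => i j; rewrite !mxE. Qed.

Lemma Sig_S1E (S : {set 'I_q}) : Sig_S1 Sig S = (selmx (@enum_val _ (mem S)))^T *m b.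
Proof. by apply/colP => i; rewrite tr_selmx_mulE !mxE. Qed.

Lemma resid_coefE (S : {set 'I_q}) (h : 'cV[R]_#|S|) :
  resid_coef h = e0 - E *m (selmx (@enum_val _ (mem S)) *m h).
Proof.
apply/colP => a; rewrite entryB mulmxA mul_selmx selmx_mulE selmxE !mxE -big_mkcond /=.
case: eqP => [->|_]; last by rewrite sub0r.
by rewrite big_pred0 ?subr0 // => k; rewrite eq_sym (negbTE (neq_lift _ _)).
Qed.

Hypothesis Sig_sym : Sig^T = Sig.
Hypothesis Sig_diag : forall a, Sig a a = 1.

Lemma Sig_m1m1_sym : A^T = A.
Proof. by apply/matrixP => i j; rewrite !mxE -[in LHS]Sig_sym mxE. Qed.

Lemma resid_quad (y : 'cV[R]_q) :
  ((e0 - E *m y)^T *m Sig *m (e0 - E *m y)) 0 0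
    = 1 - 2 * (y^T *m b) 0 0 + (y^T *m A *m y) 0 0.
Proof.
have e0Se0 : (e0^T *m Sig *m e0) 0 0 = 1 by rewrite -mxsub_selmx mxE Sig_diag.
have ySe0 : ((E *m y)^T *m Sig *m e0) 0 0 = (y^T *m b) 0 0.
  by rewrite Sig_m1_1E mxsub_selmx trmx_mul !mulmxA.
have ySy : ((E *m y)^T *m Sig *m (E *m y)) 0 0 = (y^T *m A *m y) 0 0.
  by rewrite Sig_m1m1E mxsub_selmx trmx_mul !mulmxA.
by rewrite quad_formB // (quad_formC e0) // e0Se0 ySe0 ySy.
Qed.

Hypothesis Sig_psd : forall v : 'cV[R]_q.+1, 0 <= (v^T *m Sig *m v) 0 0.
Variable c : R.
Hypothesis c_gt0 : 0 < c.
Hypothesis Sig_lbound : quad_lbound Sig c.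

Lemma Sig_m1m1_lbound : quad_lbound A c.
Proof. by rewrite Sig_m1m1E; apply: quad_lbound_mxsub => //; exact: lift_inj. Qed.

Lemma Sig_m1m1_gamma0 : A *m gamma0 Sig = b.
Proof. by rewrite mulKVmx // (quad_lbound_unitmx c_gt0 Sig_m1m1_lbound). Qed.

Lemma gamma0_quad_le1 : ((gamma0 Sig)^T *m A *m gamma0 Sig) 0 0 <= 1.
Proof.
have := Sig_psd (e0 - E *m gamma0 Sig).
by rewrite resid_quad -mulmxA Sig_m1m1_gamma0; lra.
Qed.

Section SparseBounds.
Variables (S : {set 'I_q}) (g : 'cV[R]_q) (lam : R).
Hypothesis g_supp : forall j, j \notin S -> g j 0 = 0.
Hypothesis lam_ge0 : 0 <= lam.
Hypothesis g_sup : supnorm_le Sig g lam.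

Local Notation P := (selmx (@enum_val _ (mem S))).
Local Notation y := (P *m gammaSS Sig S).
Let k := (lam * Num.sqrt #|S|%:R) ^+ 2 / c.
Let kE : k = lam ^+ 2 * (#|S|%:R / c).
Proof. by rewrite /k exprMn sqr_sqrtr ?ler0n // mulrA. Qed.

Lemma dot_Sig_m1m1_dev (v : 'cV[R]_q) :
  (v^T *m (A *m (g - gamma0 Sig))) 0 0 = (v^T *m A *m g) 0 0 - (v^T *m b) 0 0.
Proof. by rewrite mulmxBr Sig_m1m1_gamma0 mulmxBr entryB mulmxA. Qed.

Lemma quad_le_l1norm : (g^T *m A *m g) 0 0 <= 1 + 2 * (lam * l1norm g).
Proof.
have gb : (g^T *m A *m gamma0 Sig) 0 0 = (g^T *m b) 0 0.
  by rewrite -mulmxA Sig_m1m1_gamma0.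
have gd := dot_Sig_m1m1_dev g.
have gd_le : (g^T *m (A *m (g - gamma0 Sig))) 0 0 <= lam * l1norm g.
  exact: le_trans (ler_norm _) (dot_le_l1norm g g_sup).
have := Sig_m1m1_lbound (g - gamma0 Sig); rewrite quad_formB ?Sig_m1m1_sym // gb.
have := mulr_ge0 (ltW c_gt0) (sqnorm_ge0 (g - gamma0 Sig)).
have := gamma0_quad_le1; lra.
Qed.

Lemma l1norm_sqr_bound : (lam * l1norm g) ^+ 2 <= 2 * k + 4 * k ^+ 2.
Proof.
set w := lam * l1norm g.
have k_ge0 : 0 <= k by rewrite /k divr_ge0 ?sqr_ge0 // ltW.
have gg_le : (g^T *m g) 0 0 <= (1 + 2 * w) / c.
  by rewrite ler_pdivlMr // mulrC; apply: le_trans (Sig_m1m1_lbound g) quad_le_l1norm.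
have w_le : w ^+ 2 <= k * (1 + 2 * w).
  have -> : k * (1 + 2 * w) = lam ^+ 2 * (#|S|%:R * ((1 + 2 * w) / c)) by rewrite kE; ring.
  rewrite /w exprMn; apply: le_trans (ler_wpM2l (sqr_ge0 _) (l1norm_sqr_le g_supp)) _.
  by rewrite ler_wpM2l ?sqr_ge0 // ler_wpM2l.
(* 2 k w <= w^2 / 2 + 2 k^2 *)
by have := sqr_ge0 (w - 2 * k); lra.
Qed.

Lemma gammaSS_normal : P^T *m (A *m y) = P^T *m b.
Proof.
have SS_unit : Sig_SS Sig S \in unitmx.
  by rewrite Sig_SSE; apply: quad_lbound_unitmx c_gt0 (quad_lbound_mxsub enum_val_inj Sig_m1m1_lbound).
by rewrite /gammaSS !mulmxA -mxsub_selmx -Sig_SSE mulmxV // mul1mx Sig_S1E.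
Qed.

Lemma gammaSS_quad : y^T *m A *m y = y^T *m b.
Proof. by rewrite trmx_mul -!mulmxA gammaSS_normal !mulmxA -trmx_mul. Qed.

Lemma msq_residE : msq_resid Sig (gammaSS Sig S) = 1 - (y^T *m b) 0 0.
Proof. by rewrite /msq_resid /second_moment resid_coefE resid_quad gammaSS_quad; ring. Qed.

Lemma Theta11E : (Theta11 Sig g)^-1 = 1 - (g^T *m b) 0 0.
Proof. by rewrite /Theta11 invrK quad_formC ?Sig_m1m1_sym // -mulmxA Sig_m1m1_gamma0. Qed.

Lemma Theta11_msq_resid :
  (Theta11 Sig g)^-1 - msq_resid Sig (gammaSS Sig S)
    = - (y^T *m (A *m (g - gamma0 Sig))) 0 0.
Proof.
have gb : (g^T *m b) 0 0 = (y^T *m A *m g) 0 0.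
  rewrite -(selmx_enum_supp g_supp) quad_formC ?Sig_m1m1_sym //.
  by rewrite !trmx_mul trmxK -!mulmxA gammaSS_normal.
by rewrite Theta11E msq_residE dot_Sig_m1m1_dev gb; ring.
Qed.

Lemma Theta11_msq_resid_sqr_bound :
  ((Theta11 Sig g)^-1 - msq_resid Sig (gammaSS Sig S)) ^+ 2 <= k.
Proof.
have yy_le : c * (y^T *m y) 0 0 <= 1.
  apply: le_trans (Sig_m1m1_lbound y) _; rewrite gammaSS_quad.
  have := Sig_psd (resid_coef (gammaSS Sig S)).
  by rewrite -/(second_moment _ _) -/(msq_resid _ _) msq_residE; lra.
have l1_le : l1norm y ^+ 2 <= #|S|%:R * (y^T *m y) 0 0.
  by apply: l1norm_sqr_le => j; exact: selmx_enum_notin.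
rewrite Theta11_msq_resid sqrrN -real_normK ?num_real //.
apply: le_trans (_ : (lam * l1norm y) ^+ 2 <= _).
  by rewrite lerXn2r ?nnegrE ?mulr_ge0 ?sumr_ge0 // dot_le_l1norm.
rewrite exprMn kE ler_wpM2l ?sqr_ge0 //; apply: le_trans l1_le _.
by rewrite ler_wpM2l // -(ler_pM2l c_gt0) mulfV ?gt_eqF.
Qed.

End SparseBounds.

End Covariance.

Theorem lemma3p5 (R : realType) (q : nat -> nat)
  (Sig : forall n, 'M[R]_((q n).+1))
  (S : forall n, {set 'I_(q n)})
  (gs : forall n, 'cV[R]_(q n)) (lams : nat -> R) :
  (* standing assumptions on the covariance *)
  (forall n, std_cov (Sig n)) ->
  (* 1 / Lambda_min^2 = O(1): eigenvalues eventually bounded below *)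
  (exists2 c : R, 0 < c &
     \forall n \near \oo, forall a : R, eigenvalue (Sig n) a -> c <= a) ->
  (* gamma^sharp supported on S *)
  (forall n j, j \notin S n -> gs n j 0 = 0) ->
  (forall n, 0 < lams n) ->
  (forall n, supnorm_le (Sig n) (gs n) (lams n)) ->
  (fun n => lams n * Num.sqrt (#|S n|%:R)) @ \oo --> (0 : R) ->
  eligible Sig gs lams /\
  (fun n => (Theta11 (Sig n) (gs n))^-1 - msq_resid (Sig n) (gammaSS (Sig n) (S n)))
     @ \oo --> (0 : R).
Proof.
move=> Sig_cov [c c_gt0 Sig_eig] gs_supp lams_gt0 gs_sup u0.
have Sig_lbound : \forall n \near \oo, quad_lbound (Sig n) c.
  apply: filterS Sig_eig => n; have [Sig_sym _ _ _] := Sig_cov n.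
  exact: eigen_quad_lbound.
split; [split => // | ]; apply: cvg0_sqr_le (cvg0_poly_sqr_div c u0) _;
  apply: filterS Sig_lbound => n lbound_n; have [Sig_sym Sig_psd _ Sig_diag] := Sig_cov n;
  have lam_ge0 := ltW (lams_gt0 n).
  exact (l1norm_sqr_bound Sig_sym Sig_diag Sig_psd c_gt0 lbound_n (gs_supp n) (gs_sup n)).
have := Theta11_msq_resid_sqr_bound Sig_sym Sig_diag Sig_psd c_gt0 lbound_n (gs_supp n) lam_ge0 (gs_sup n).
set k := _ / c; have : 0 <= k by rewrite divr_ge0 ?sqr_ge0 ?ltW.
by have := sqr_ge0 k; lra.
Qed.
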